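(* Let $G$ be a graph with weight function $w:V(G)\to[0,1]$, and let $S$ be an even set in $G$. Let $f:2^S\to\mathbb{R}$ be given by $f(A)=-\alpha_{A,S}(G)$ for $A\subseteq S$. Then $f$ is submodular, i.e. $f(A)+f(B)\ge f(A\cup B)+f(A\cap B)$ for all $A,B\subseteq S$.
   Context: All graphs are finite and simple. Paths are induced paths; length is the number of edges; a path is even if its length is even. An even pair in $G$ is a pair $\{x,y\}$ of vertices such that every induced path in $G$ from $x$ to $y$ is even (in particular $x,y$ are non-adjacent). An even set is a set of vertices every two of which form an even pair (so even sets are independent). For $X\subseteq V(G)$, $w(X)=\sum_{x\in X}w(x)$. For an independent set $S$ and $A\subseteq S$, $\alpha_{A,S}(G)$ denotes the maximum of $w(I)$ over independent sets $I$ of $G$ with $I\cap S=A$. *)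

From HB Require Import structures.
From mathcomp Require Import all_boot all_order all_algebra.
Set Implicit Arguments. Unset Strict Implicit. Unset Printing Implicit Defensive.
Import Order.TTheory GRing.Theory Num.Theory.

Section Graphs.
Variable T : finType.
Variable e : rel T.

Definition simple_graph : Prop := symmetric e /\ irreflexive e.

(* p is the vertex sequence x :: q of an induced path from x to y:
   distinct vertices, and two vertices of the path are adjacent iff
   they are consecutive on the path. Its length is size q. *)
Definition induced_path (x y : T) (q : seq T) : bool :=
  let p := x :: q in
  [&& last x q == y, uniq p &
      [forall i : 'I_(size p), forall j : 'I_(size p),
         e (nth x p i) (nth x p j) == ((i.+1 == j :> nat) || (j.+1 == i :> nat))]].

Definition even_pair (x y : T) : Prop :=
  forall q : seq T, induced_path x y q -> ~~ odd (size q).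

Definition even_set (S : {set T}) : Prop :=
  forall x y, x \in S -> y \in S -> x != y -> even_pair x y.

Definition stable (I : {set T}) : bool :=
  [forall x in I, forall y in I, ~~ e x y].

Variable R : realFieldType.
Variable w : T -> R.

Definition wt (X : {set T}) : R := (\sum_(x in X) w x)%R.

(* Written as a max-fold starting from 0; since weights are nonnegative
   and A itself is admissible when A \subset S (S even, hence stable),
   this is exactly the maximum. *)
Definition alphaAS (A S : {set T}) : R :=
  (\big[Num.max/0]_(I : {set T} | stable I && (I :&: S == A)) wt I)%R.

End Graphs.

(* Choose maximum-weight stable sets IA, IB with traces A, B on S.  The subgraph
   induced by IA Δ IB is bipartite with sides IA \ IB and IB \ IA, and a shortest
   path in it is an induced path of G; so a path from IB \ IA to IA \ IB has odd
   length, and since S is even no vertex of B \ A is connected to a vertex of A \ B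
   in that subgraph.  Exchanging IA and IB on the components X that meet B \ A
   gives stable sets with traces A ∪ B and A ∩ B whose weights add up to
   w(IA) + w(IB). *)

From mathcomp Require Import all_boot all_order all_algebra.
From mathcomp Require Import zify lra.
Import Order.TTheory GRing.Theory Num.Theory.

Set Implicit Arguments.
Unset Strict Implicit.
Unset Printing Implicit Defensive.

Lemma last_take_nth (T : Type) (x : T) (q : seq T) i :
  i <= size q -> last x (take i q) = nth x (x :: q) i.
Proof.
move=> le_iq; rewrite (last_nth x) size_takel //.
by rewrite -[x :: take i q]/(take i.+1 (x :: q)) nth_take.
Qed.

Lemma path_splice (T : Type) (r : rel T) x q s i j :
  i <= j <= size q -> path r x q ->
  path r (nth x (x :: q) i) s -> last (nth x (x :: q) i) s = nth x (x :: q) j ->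
  path r x (take i q ++ s ++ drop j q) /\ last x (take i q ++ s ++ drop j q) = last x q.
Proof.
move=> /andP[le_ij le_jq] pq ps ls.
have le_iq := leq_trans le_ij le_jq.
have split_j : take j q ++ drop j q = q := cat_take_drop j q.
have pdrop : path r (nth x (x :: q) j) (drop j q).
  by move: pq; rewrite -{1}split_j cat_path last_take_nth // => /andP[].
rewrite cat_path !last_cat last_take_nth // take_path //= cat_path ls ps pdrop.
by rewrite -[in RHS]split_j last_cat last_take_nth.
Qed.

Lemma shortest_path_exists (T : finType) (r : rel T) x q : path r x q ->
  exists q0, [/\ path r x q0, last x q0 = last x q &
    forall q', path r x q' -> last x q' = last x q -> size q0 <= size q'].
Proof.
move=> pq; pose reach n := [exists t : n.-tuple T, path r x t && (last x t == last x q)].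
have reach_size q' : path r x q' -> last x q' = last x q -> reach (size q').
  by move=> pq' lq'; apply/existsP; exists (in_tuple q'); rewrite pq' lq' eqxx.
have reach_q : exists n, reach n by exists (size q); apply: reach_size.
have [n /existsP[t /andP[pt /eqP lt]] n_min] := ex_minnP reach_q.
by exists t; split=> // q' pq' lq'; rewrite size_tuple n_min ?reach_size.
Qed.

Lemma path_parity (T : Type) (r : rel T) (s : pred T) :
  (forall u v, r u v -> s u != s v) ->
  forall x q, path r x q -> s (last x q) = s x (+) odd (size q).
Proof.
move=> r_flips x q; elim: q x => [|y q IHq] x /=; first by rewrite addbF.
case/andP=> /r_flips/negPf sxy /IHq ->.
by move: sxy; case: (s x); case: (s y); case: odd.
Qed.

Definition symdiff (T : finType) (P Q : {set T}) : {set T} := (P :\: Q) :|: (Q :\: P).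

Section InducedSubgraph.

Variables (T : finType) (e : rel T).

Definition edge_in (D : {set T}) : rel T := [rel u v | [&& u \in D, v \in D & e u v]].

Lemma stableP (I : {set T}) :
  reflect (forall x y, x \in I -> y \in I -> ~~ e x y) (stable e I).
Proof.
apply: (iffP forall_inP) => [I_st x y xI yI | I_st x xI].
  by move/forall_inP: (I_st x xI); apply.
by apply/forall_inP => y; apply: I_st.
Qed.

Lemma path_edge_in_mem D x q :
  path (edge_in D) x q -> q != [::] -> {subset x :: q <= D}.
Proof.
elim: q x => // y q IHq x /= /andP[/and3P[xD yD _] pq] _ z.
rewrite inE => /predU1P[-> // | zq].
by case: q IHq pq zq => [|y' q] IHq pq; [rewrite inE => /eqP -> | apply: IHq].
Qed.

Hypotheses (e_sym : symmetric e) (e_irr : irreflexive e).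

Lemma shortest_path_induced D x q : path (edge_in D) x q ->
    (forall q', path (edge_in D) x q' -> last x q' = last x q -> size q <= size q') ->
  induced_path e x (last x q) q.
Proof.
move=> pq q_min; set p := x :: q.
have no_shortcut i j s : i + size s < j <= size q ->
    path (edge_in D) (nth x p i) s -> last (nth x p i) s = nth x p j -> False.
  case/andP=> lt_ij le_jq ps ls.
  have le_ijq : i <= j <= size q by rewrite le_jq andbT; lia.
  have [ps' ls'] := path_splice le_ijq pq ps ls.
  have := q_min _ ps' ls'; rewrite !size_cat size_drop size_takel; lia.
have adj i j : i < j <= size q -> e (nth x p i) (nth x p j) = (i.+1 == j).
  have [<- | ne_ij] := eqVneq i.+1 j => /andP[lt_ij le_jq].
    by have /and3P[_ _ ->] := pathP x pq i le_jq.
  apply/negP => e_ij; apply: (no_shortcut i j [:: nth x p j]) => //=; first lia.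
  have q_nil : q != [::].
    by rewrite -size_eq0 -lt0n; apply: leq_trans le_jq; apply: leq_ltn_trans lt_ij.
  have sub_D := path_edge_in_mem pq q_nil.
  rewrite /= andbT /edge_in /= e_ij !sub_D ?mem_nth //= ltnS (leq_trans (ltnW lt_ij)) //.
rewrite /induced_path eqxx andTb; apply/andP; split.
  apply: contraT => /(uniqPn x)[i [j [lt_ij lt_j eq_ij]]].
  by case: (no_shortcut i j [::]); rewrite //= addn0 lt_ij -ltnS.
apply/forallP => i; apply/forallP => j; apply/eqP.
have [lt_ij | lt_ji | ->] := ltngtP i j.
- rewrite adj; last by rewrite lt_ij -ltnS; exact: ltn_ord j.
  by rewrite (gtn_eqF (leqW lt_ij)) orbF.
- rewrite e_sym adj; last by rewrite lt_ji -ltnS; exact: ltn_ord i.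
  by rewrite (gtn_eqF (leqW lt_ji)).
- by rewrite e_irr (gtn_eqF (ltnSn j)).
Qed.

Lemma edge_in_symdiff_flips (P Q : {set T}) u v : stable e P -> stable e Q ->
  edge_in (symdiff P Q) u v -> (u \in P) != (v \in P).
Proof.
move=> /stableP P_st /stableP Q_st /and3P[]; rewrite !inE => uD vD e_uv.
case: (boolP (u \in P)) (boolP (v \in P)) uD vD => uP [] vP //= uD vD.
  by have := P_st u v uP vP; rewrite e_uv.
by move: uD vD; rewrite !andbF /= => uQ vQ; have := Q_st u v uQ vQ; rewrite e_uv.
Qed.

Lemma even_pair_symdiff_disconnected (P Q : {set T}) x y :
  stable e P -> stable e Q -> even_pair e x y -> x \in P -> y \notin P ->
  ~~ connect (edge_in (symdiff P Q)) x y.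
Proof.
move=> P_st Q_st xy_even xP yP; apply/negP => /connectP[p pp y_last].
have [q [pq lq q_min]] := shortest_path_exists pp.
have q_ind : induced_path e x y q.
  by rewrite y_last -lq; apply: (shortest_path_induced pq) => q' pq' lq'; rewrite q_min // lq'.
have := path_parity (fun u v => @edge_in_symdiff_flips P Q u v P_st Q_st) pq.
by rewrite lq -y_last xP (negbTE yP) (negbTE (xy_even q q_ind)).
Qed.

Definition swap_on (X : {pred T}) (P Q : {set T}) : {set T} :=
  [set v | if v \in X then v \in P else v \in Q].

Lemma stable_swap_on (X : {pred T}) (P Q : {set T}) :
    stable e P -> stable e Q -> closed (edge_in (symdiff P Q)) X ->
  stable e (swap_on X P Q).
Proof.
move=> /stableP P_st /stableP Q_st X_closed.
have cross u v : u \in X -> v \notin X -> u \in P -> v \in Q -> ~~ e u v.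
  move=> uX vX uP vQ; apply/negP => e_uv.
  have uQ : u \notin Q by apply: contraL e_uv => uQ; apply: Q_st.
  have vP : v \notin P by apply: contraL e_uv => vP; apply: P_st.
  have : edge_in (symdiff P Q) u v by rewrite /edge_in /symdiff /= !inE uP vQ uQ vP e_uv.
  by move/X_closed; rewrite uX (negbTE vX).
apply/stableP => x y; rewrite !inE.
case: (boolP (x \in X)) => xX; case: (boolP (y \in X)) => yX.
- exact: P_st.
- exact: cross.
- by move=> xQ yP; rewrite e_sym; apply: cross.
- exact: Q_st.
Qed.

Lemma even_set_stable S : even_set e S -> stable e S.
Proof.
move=> S_even; apply/stableP => x y xS yS; have [-> | ne_xy] := eqVneq x y.
  by rewrite e_irr.
apply/negP => e_xy; suff : induced_path e x y [:: y] by move/(S_even x y xS yS ne_xy).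
rewrite /induced_path /= eqxx inE ne_xy.
apply/forallP => -[[|[|i]] lt_i]; apply/forallP => -[[|[|j]] lt_j] //=.
all: by rewrite ?e_irr ?(e_sym y x) ?e_xy.
Qed.

Lemma stable_exchange (S P Q : {set T}) : even_set e S -> stable e P -> stable e Q ->
  exists X : {pred T}, [/\ stable e (swap_on X Q P), stable e (swap_on X P Q),
    swap_on X Q P :&: S = (P :|: Q) :&: S & swap_on X P Q :&: S = P :&: Q :&: S].
Proof.
move=> S_even P_st Q_st; set D := symdiff P Q.
set X := closure (edge_in D) ((Q :\: P) :&: S).
have X_closed : closed (edge_in D) X.
  by apply/closure_closed/sym_connect_sym => u v; rewrite /edge_in /= e_sym andbCA.
have QP_in_X v : v \in S -> v \in Q -> v \notin P -> v \in X.
  by move=> vS vQ vP; apply: mem_closure; rewrite !inE vS vQ vP.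
have PQ_notin_X v : v \in S -> v \in P -> v \notin Q -> v \notin X.
  move=> vS vP vQ; apply/negP => /existsP[u /andP[vu]].
  rewrite !inE => /andP[/andP[uP uQ] uS].
  have ne_vu : v != u by apply: contraNneq uP => <-.
  by have /negP := even_pair_symdiff_disconnected P_st Q_st (S_even v u vS uS ne_vu) vP uP.
exists X; split.
- by apply: stable_swap_on; rewrite // /symdiff setUC.
- exact: stable_swap_on.
all: apply/setP => v; rewrite !inE; case: (boolP (v \in S)) => vS; rewrite ?andbF ?andbT //.
all: have := QP_in_X v vS; have := PQ_notin_X v vS.
all: case: (v \in X); case: (v \in P); case: (v \in Q) => //= PQ_v QP_v.
all: by [case: (PQ_v isT isT) | case: (QP_v isT isT)].
Qed.

Variables (R : realFieldType) (w : T -> R).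
Local Open Scope ring_scope.

Lemma wt_swap_on (X : {pred T}) (P Q : {set T}) :
  wt w (swap_on X P Q) + wt w (swap_on X Q P) = wt w P + wt w Q.
Proof.
rewrite /wt !(big_mkcond (fun v => v \in _)) -!big_split /=.
by apply: eq_bigr => v _; rewrite !inE; case: (v \in X); case: (v \in P); case: (v \in Q);
  rewrite ?addr0 ?add0r.
Qed.

Lemma alphaAS_ge (S I : {set T}) : stable e I -> wt w I <= alphaAS e w (I :&: S) S.
Proof. by move=> I_st; apply: le_bigmax_cond; rewrite I_st eqxx. Qed.

Lemma alphaAS_attained (S A : {set T}) :
    even_set e S -> (forall v, 0 <= w v) -> A \subset S ->
  exists2 I, stable e I & I :&: S = A /\ alphaAS e w A S = wt w I.
Proof.
move=> S_even w_ge0 AS.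
have A_adm : stable e A && (A :&: S == A).
  rewrite (setIidPl AS) eqxx andbT; apply/stableP => x y xA yA.
  by apply: (stableP _ (even_set_stable S_even)); apply: (subsetP AS).
have wt_ge0 J : 0 <= wt w J by apply: sumr_ge0 => v _; apply: w_ge0.
have [I] := eq_bigmax A [pred J | stable e J && (J :&: S == A)] (wt w) A_adm
  (fun J _ => wt_ge0 J).
by rewrite inE => /andP[I_st /eqP I_tr] alpha_I; exists I.
Qed.

End InducedSubgraph.

Local Open Scope ring_scope.

Theorem lemma2p2 (T : finType) (e : rel T) (R : realFieldType) (w : T -> R)
  (S : {set T}) :
  simple_graph e ->
  (forall v, 0 <= w v <= 1) ->
  even_set e S ->
  let f := fun A : {set T} => - alphaAS e w A S in
  forall A B : {set T}, A \subset S -> B \subset S ->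
    f A + f B >= f (A :|: B) + f (A :&: B).
Proof.
move=> [e_sym e_irr] w_01 S_even f A B AS BS; rewrite /f.
have w_ge0 v : 0 <= w v by case/andP: (w_01 v).
have [IA IA_st [IA_tr ->]] := alphaAS_attained e_sym e_irr S_even w_ge0 AS.
have [IB IB_st [IB_tr ->]] := alphaAS_attained e_sym e_irr S_even w_ge0 BS.
have [X [J1_st J2_st J1_tr J2_tr]] := stable_exchange e_sym e_irr S_even IA_st IB_st.
have := alphaAS_ge w S J1_st; rewrite J1_tr setIUl IA_tr IB_tr.
have := alphaAS_ge w S J2_st; rewrite J2_tr setIIl IA_tr IB_tr.
have := wt_swap_on w X IB IA.
lra.
Qed.
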